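(* Let $\mathbb{A}$ be a Boolean algebra and $(\mathbb{B},\mu)$ a metric Boolean algebra. Let $(\varphi_n)$ be a sequence in $\mathcal{H}(\mathbb{A},\mathbb{B})$ converging pointwise metric to $\varphi\in\mathcal{H}(\mathbb{A},\mathbb{B})$. If the sequence $(\widehat{\mu}\circ f_{\varphi_n}^{-1})$ of Radon measures on $St(\mathbb{A})$ is uniformly countably additive, then $(\varphi_n)$ converges pointwise Borel metric to $\varphi$.
   Context: A metric Boolean algebra $(\mathbb{B},\mu)$ is a Boolean algebra with a strictly positive finitely additive probability measure $\mu$; $d_\mu(A,B)=\mu(A\triangle B)$. $\mathcal{H}(\mathbb{A},\mathbb{B})$ is the set of homomorphisms $\mathbb{A}\to\mathbb{B}$. Algebras are identified with clopen algebras of their Stone spaces $St(\cdot)$; $\widehat{\mu}$ is the unique Radon extension of $\mu$ to $St(\mathbb{B})$; $f_\varphi\colon St(\mathbb{B})\to St(\mathbb{A})$, $f_\varphi(x)=\varphi^{-1}[x]$. $(\varphi_n)$ converges pointwise metric to $\varphi$ if $d_\mu(\varphi_n(A),\varphi(A))\to0$ for each $A\in\mathbb{A}$; pointwise Borel metric if $\widehat{\mu}(f_{\varphi_n}^{-1}[B]\triangle f_\varphi^{-1}[B])\to0$ for every Borel $B\subseteq St(\mathbb{A})$. A sequence $(\mu_k)$ of Radon measures on a compact space $K$ is uniformly countably additive if for every decreasing sequence $(E_n)$ of Borel subsets of $K$ with $\bigcap_nE_n=\emptyset$ and every $\varepsilon>0$ there is $N$ with $|\mu_k(E_n)|<\varepsilon$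 for all $n\ge N$ and all $k$. *)

From HB Require Import structures.
From mathcomp Require Import all_boot all_order all_algebra.
From mathcomp Require Import all_classical all_reals all_analysis.
Set Implicit Arguments. Unset Strict Implicit. Unset Printing Implicit Defensive.
Import Order.TTheory GRing.Theory Num.Theory.
Import numFieldNormedType.Exports.
Local Open Scope classical_set_scope.
Local Open Scope ring_scope.

Definition is_bool_hom d d' (A : ctbDistrLatticeType d) (B : ctbDistrLatticeType d')
  (f : A -> B) : Prop :=
  [/\ f Order.bottom = Order.bottom, f Order.top = Order.top,
      (forall a b, f (Order.meet a b) = Order.meet (f a) (f b)),
      (forall a b, f (Order.join a b) = Order.join (f a) (f b)) &
      (forall a, f (Order.compl a) = Order.compl (f a))].

Definition bhom d d' (A : ctbDistrLatticeType d) (B : ctbDistrLatticeType d') :=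
  {f : A -> B | is_bool_hom f}.

Definition hom_fun d d' (A : ctbDistrLatticeType d) (B : ctbDistrLatticeType d')
  (phi : bhom A B) : A -> B := proj1_sig phi.
Coercion hom_fun : bhom >-> Funclass.

Definition symd d (B : ctbDistrLatticeType d) (a b : B) : B :=
  Order.join (Order.diff a b) (Order.diff b a).

Definition metric_ba d (R : realType) (B : ctbDistrLatticeType d) (mu : B -> R) : Prop :=
  [/\ mu Order.bottom = 0,
      (forall b, b <> Order.bottom -> 0 < mu b),
      (forall a b, Order.meet a b = Order.bottom ->
                   mu (Order.join a b) = mu a + mu b) &
      mu Order.top = 1].

Definition d_mu d (R : realType) (B : ctbDistrLatticeType d) (mu : B -> R) (a b : B) : R :=
  mu (symd a b).

Definition is_ultrafilter d (A : ctbDistrLatticeType d) (U : set A) : Prop :=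
  [/\ U Order.top, ~ U Order.bottom,
      (forall a b, U a -> (a <= b)%O -> U b),
      (forall a b, U a -> U b -> U (Order.meet a b)) &
      (forall a, U a \/ U (Order.compl a))].

Definition St d (A : ctbDistrLatticeType d) := {U : set A | is_ultrafilter U}.

Definition clop d (A : ctbDistrLatticeType d) (a : A) : set (St A) :=
  [set x | proj1_sig x a].

Definition stone_open d (A : ctbDistrLatticeType d) (O : set (St A)) : Prop :=
  forall x, O x -> exists a, proj1_sig x a /\ clop a `<=` O.

Definition stone_borel d (A : ctbDistrLatticeType d) : set (set (St A)) :=
  <<s stone_open (A := A) >>.

Definition stone_compact d (A : ctbDistrLatticeType d) (K : set (St A)) : Prop :=
  forall (I : Type) (O : I -> set (St A)), (forall i, stone_open (O i)) ->
    K `<=` \bigcup_i O i ->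
    exists D : set I, finite_set D /\ K `<=` \bigcup_(i in D) O i.

Definition radon_measure d (R : realType) (A : ctbDistrLatticeType d)
  (nu : set (St A) -> R) : Prop :=
  [/\ (forall E, stone_borel E -> 0 <= nu E),
      nu set0 = 0,
      (forall F : nat -> set (St A), (forall n, stone_borel (F n)) ->
         trivIset setT F ->
         (fun n => \sum_(0 <= i < n) nu (F i)) @ \oo --> nu (\bigcup_n F n)) &
      (forall E, stone_borel E -> forall eps : R, 0 < eps ->
         exists K, [/\ stone_compact K, K `<=` E & nu E - eps < nu K])].

Definition radon_extension d (R : realType) (B : ctbDistrLatticeType d)
  (mu : B -> R) (nu : set (St B) -> R) : Prop :=
  radon_measure nu /\ forall b, nu (clop b) = mu b.

(** f_phi : St(B) -> St(A), f_phi(x) = phi^{-1}[x] *)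
Lemma preimage_ultrafilter d d' (A : ctbDistrLatticeType d) (B : ctbDistrLatticeType d')
  (phi : bhom A B) (x : St B) : is_ultrafilter (phi @^-1` proj1_sig x).
Proof.
case: phi => f [f0 f1 fI fU fC]; case: x => U [U1 U0 Uup UI UC] /=.
split => /=.
- by rewrite f1.
- by rewrite f0.
- move=> a b Ua /meet_idPl ab; apply: (Uup _ _ Ua); apply/meet_idPl.
  by rewrite -fI ab.
- by move=> a b Ua Ub; rewrite fI; exact: UI.
- by move=> a; rewrite fC; exact: UC.
Qed.

Definition stone_map d d' (A : ctbDistrLatticeType d) (B : ctbDistrLatticeType d')
  (phi : bhom A B) : St B -> St A :=
  fun x => exist _ (phi @^-1` proj1_sig x) (preimage_ultrafilter phi x).

Definition pushforward_m (R : realType) (X Y : Type) (nu : set X -> R) (f : X -> Y) :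
  set Y -> R := fun S => nu (f @^-1` S).

Definition setSymD (X : Type) (S T : set X) : set X := (S `\` T) `|` (T `\` S).

Definition pw_metric_cvg d d' (R : realType) (A : ctbDistrLatticeType d)
  (B : ctbDistrLatticeType d') (mu : B -> R) (phis : nat -> bhom A B) (phi : bhom A B) : Prop :=
  forall a : A, (fun n => d_mu mu (phis n a) (phi a)) @ \oo --> (0 : R).

Definition pw_borel_metric_cvg d d' (R : realType) (A : ctbDistrLatticeType d)
  (B : ctbDistrLatticeType d') (nu : set (St B) -> R) (phis : nat -> bhom A B)
  (phi : bhom A B) : Prop :=
  forall S : set (St A), stone_borel S ->
    (fun n => nu (setSymD (stone_map (phis n) @^-1` S) (stone_map phi @^-1` S)))
      @ \oo --> (0 : R).

Definition unif_ctbl_additive d (R : realType) (A : ctbDistrLatticeType d)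
  (nus : nat -> set (St A) -> R) : Prop :=
  forall E : nat -> set (St A), (forall n, stone_borel (E n)) ->
    (forall n, E n.+1 `<=` E n) -> \bigcap_n E n = set0 ->
    forall eps : R, 0 < eps -> exists N : nat,
      forall n k, (N <= n)%N -> `|nus k (E n)| < eps.

From mathcomp Require Import all_boot all_order all_algebra.
From mathcomp Require Import all_classical all_reals all_analysis.
From mathcomp Require Import lra.
Set Implicit Arguments. Unset Strict Implicit. Unset Printing Implicit Defensive.
Import Order.TTheory Order.CTBDistrLatticeTheory GRing.Theory Num.Theory.
Import numFieldNormedType.Exports.
Local Open Scope classical_set_scope.
Local Open Scope ring_scope.

(** The Borel sets S with nu(f_n^-1 S Δ f^-1 S) -> 0, where f_n and f are the
    Stone maps of phi_n and phi, form a sigma-algebra.  It contains the clopen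
    sets by pointwise metric convergence.  It contains every open set U because U
    is approximated from inside by a clopen set uniformly in n: inner regularity
    gives this for each single measure nu ∘ f_n^-1, and if no clopen set worked
    for all n at once, one could build an increasing chain of clopen subsets of U
    whose increments keep mass e/2 for some nu ∘ f_n^-1, against uniform
    countable additivity.  The same uniformity controls the tails
    S \ (F_0 ∪ ... ∪ F_k) of a countable union. *)

Section Ultrafilter.
Context d (X : ctbDistrLatticeType d) (x : St X).
Local Notation U := (proj1_sig x).

Lemma ultra_up a b : U a -> (a <= b)%O -> U b.
Proof. by case: x => V [] /= _ _ up _ _; apply: up. Qed.

Lemma ultra_bot : ~ U Order.bottom.
Proof. by case: x => V []. Qed.

Lemma ultraI a b : U (Order.meet a b) <-> U a /\ U b.
Proof.
split=> [Uab|[Ua Ub]]; first by split; apply: ultra_up Uab _; [exact: leIl|exact: leIr].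
by move: Ua Ub; case: x => V [] /= _ _ _ VI _; exact: VI.
Qed.

Lemma ultraC a : U (Order.compl a) <-> ~ U a.
Proof.
split=> [Uca Ua|]; first by apply: ultra_bot; rewrite -(meetxC a); exact/ultraI.
by case: x => V [] /= _ _ _ _ /(_ a) [].
Qed.

Lemma ultraU a b : U (Order.join a b) <-> U a \/ U b.
Proof.
split=> [Uab|[Ua|Ub]]; last 2 first.
- by apply: ultra_up Ua _; exact: leUl.
- by apply: ultra_up Ub _; exact: leUr.
apply: contrapT => /not_orP [nUa nUb].
have Uc : U (Order.compl (Order.join a b)).
  by rewrite complU; apply/ultraI; split; apply/ultraC.
exact: (ultraC (Order.join a b)).1 Uc Uab.
Qed.

Lemma ultraD a b : U (Order.diff a b) <-> U a /\ ~ U b.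
Proof. by rewrite diffE; split => [/ultraI [? /ultraC]|[? /ultraC ?]] //; apply/ultraI. Qed.

End Ultrafilter.

Lemma St_le_eq d (X : ctbDistrLatticeType d) (x y : St X) :
  proj1_sig y `<=` proj1_sig x -> y = x.
Proof.
move=> yx; have exy : proj1_sig y = proj1_sig x.
  apply/seteqP; split => // b xb; apply: contrapT => nyb.
  exact: (ultraC x b).1 (yx _ ((ultraC y b).2 nyb)) xb.
case: x y exy {yx} => V Vu [W Wu] /= exy; subst W.
by congr exist; exact: Prop_irrelevance.
Qed.

Section StoneSpace.
Context d (X : ctbDistrLatticeType d).
Implicit Types (a b : X) (K S T : set (St X)).

Lemma clop0 : clop (Order.bottom : X) = set0.
Proof. by apply/seteqP; split => x // /ultra_bot. Qed.

Lemma clopU a b : clop (Order.join a b) = clop a `|` clop b.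
Proof. by apply/seteqP; split => x /ultraU. Qed.

Lemma clop_symd a b : clop (symd a b) = setSymD (clop a) (clop b).
Proof.
apply/seteqP; split => x; rewrite /clop /symd /=.
  by move=> /ultraU [] /ultraD ?; [left|right].
by move=> [] ?; apply/ultraU; [left|right]; apply/ultraD.
Qed.

Lemma stone_open_clop a : stone_open (clop a).
Proof. by move=> x xa; exists a; split. Qed.

Lemma compact_clop_cover K (P : X -> Prop) : stone_compact K ->
  K `<=` \bigcup_(a in P) clop a -> P Order.bottom ->
  (forall a b, P a -> P b -> P (Order.join a b)) ->
  exists2 c, P c & K `<=` clop c.
Proof.
move=> cK KP P0 PU.
pose O a := [set x : St X | P a /\ clop a x].
have O_open a : stone_open (O a) by move=> x [Pa xa]; exists a; split => // y ya.
have KO : K `<=` \bigcup_a O a by move=> x /KP [a Pa xa]; exists a.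
have [D [/finite_seqP [s ->] KD]] := cK X O O_open KO.
suff [c Pc sc] : exists2 c, P c & \bigcup_(a in [set` s]) O a `<=` clop c.
  by exists c => //; exact: subset_trans KD sc.
elim: s {KD} => [|a s [c Pc sc]]; first by exists Order.bottom => // x [].
have [Pa|nPa] := pselect (P a).
  exists (Order.join a c); first exact: PU.
  move=> x [i]; rewrite /= inE clopU => /orP [/eqP -> [] //|si Oix]; first by left.
  by right; apply: sc; exists i.
exists c => // x [i]; rewrite /= inE => /orP [/eqP -> [] //|si Oix].
by apply: sc; exists i.
Qed.

Lemma stone_compact_closed K : stone_compact K -> stone_open (~` K).
Proof.
move=> cK x nKx.
have cov : K `<=` \bigcup_(a in fun b => ~ proj1_sig x b) clop a.
  move=> y Ky; apply: contrapT => ny; apply: nKx.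
  suff <- : y = x by [].
  apply: St_le_eq => b yb; apply: contrapT => nxb; apply: ny; by exists b.
have joinP a b : ~ proj1_sig x a -> ~ proj1_sig x b -> ~ proj1_sig x (Order.join a b).
  by move=> nxa nxb /ultraU [].
have [c nxc Kc] := compact_clop_cover cK cov (@ultra_bot _ _ x) joinP.
exists (Order.compl c); split; first exact/ultraC.
by move=> z /ultraC nzc /Kc.
Qed.

Lemma stone_borel_sigma : sigma_algebra setT (@stone_borel d X).
Proof. exact: smallest_sigma_algebra. Qed.

Lemma stone_borel_open S : stone_open S -> stone_borel S.
Proof. exact: sub_sigma_algebra. Qed.

Lemma stone_borel0 : stone_borel (set0 : set (St X)).
Proof. by case: stone_borel_sigma. Qed.

Lemma stone_borelC S : stone_borel S -> stone_borel (~` S).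
Proof. by case: stone_borel_sigma => _ + _ => /[apply]; rewrite setTD. Qed.

Lemma stone_borel_bigcup (F : nat -> set (St X)) :
  (forall n, stone_borel (F n)) -> stone_borel (\bigcup_n F n).
Proof. by case: stone_borel_sigma => _ _; apply. Qed.

Lemma stone_borelU S T : stone_borel S -> stone_borel T -> stone_borel (S `|` T).
Proof.
move=> bS bT; rewrite -bigcup2E; apply: stone_borel_bigcup => -[|[|n]] //=.
exact: stone_borel0.
Qed.

Lemma stone_borelD S T : stone_borel S -> stone_borel T -> stone_borel (S `\` T).
Proof.
move=> bS bT; rewrite setDE -[S]setCK -setCU.
by apply: stone_borelC; apply: stone_borelU => //; exact: stone_borelC.
Qed.

Lemma stone_borel_setSymD S T :
  stone_borel S -> stone_borel T -> stone_borel (setSymD S T).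
Proof. by move=> bS bT; apply: stone_borelU; exact: stone_borelD. Qed.

Lemma stone_borel_clop a : stone_borel (clop a).
Proof. apply: stone_borel_open; exact: stone_open_clop. Qed.

Lemma stone_borel_compact K : stone_compact K -> stone_borel K.
Proof. by move=> /stone_compact_closed/stone_borel_open/stone_borelC; rewrite setCK. Qed.

End StoneSpace.

Section StoneMap.
Context dA dB (A : ctbDistrLatticeType dA) (B : ctbDistrLatticeType dB) (psi : bhom A B).

Lemma bhom0 : psi Order.bottom = Order.bottom.
Proof. by case: (proj2_sig psi). Qed.

Lemma bhomU a b : psi (Order.join a b) = Order.join (psi a) (psi b).
Proof. by case: (proj2_sig psi) => _ _ _ fU _; exact: fU. Qed.

Lemma stone_open_preimage S : stone_open S -> stone_open (stone_map psi @^-1` S).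
Proof. by move=> oS x /oS [a [xa aS]]; exists (psi a); split => // y ya; exact: aS. Qed.

Lemma stone_borel_preimage S : stone_borel S -> stone_borel (stone_map psi @^-1` S).
Proof.
move: S; apply: smallest_sub => [|S /stone_open_preimage/stone_borel_open //].
split => [|S bS|F bF].
- exact: stone_borel0.
- by rewrite setTD; exact: stone_borelC.
- exact: stone_borel_bigcup.
Qed.

End StoneMap.

Create HintDb borel.
#[local] Hint Resolve stone_borel0 stone_borelC stone_borelU stone_borelD
  stone_borel_bigcup stone_borel_setSymD stone_borel_open stone_borel_clop
  stone_borel_compact stone_borel_preimage : borel.

Lemma cvgr0_approx (R : realFieldType) (T : Type) (F : set_system T) {FF : Filter F}
    (u : T -> R) :
  (forall t, 0 <= u t) ->
  (forall e, 0 < e -> exists2 v : T -> R, v @ F --> 0 & forall t, u t <= v t + e) ->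
  u @ F --> 0.
Proof.
move=> u_ge0 approx; apply/cvgr0Pnorm_lt => e e_gt0.
have e2_gt0 : 0 < e / 2 by rewrite divr_gt0.
have [v v0 uv] := approx _ e2_gt0.
near=> t.
have vt : `|v t| < e / 2 by near: t; exact: cvgr0_norm_lt.
rewrite ger0_norm //; have := uv t; have := ler_norm (v t); lra.
Unshelve. all: by end_near. Qed.

Section SymmetricDifference.
Context (T : Type).
Implicit Types P Q : set T.

Lemma setSymDC P Q : setSymD (~` P) (~` Q) = setSymD P Q.
Proof.
apply/seteqP; split => x [[a b]|[a b]].
- by right; split => //; apply: contrapT.
- by left; split => //; apply: contrapT.
- by right; split => //= /(_ a).
- by left; split => //= /(_ a).
Qed.

Lemma setSymDU P P' Q Q' :
  setSymD (P `|` P') (Q `|` Q') `<=` setSymD P Q `|` setSymD P' Q'.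
Proof.
move=> x [[[Px|P'x] nQ]|[[Qx|Q'x] nP]].
- by left; left; split => // Qx; apply: nQ; left.
- by right; left; split => // Q'x; apply: nQ; right.
- by left; right; split => // Px; apply: nP; left.
- by right; right; split => // P'x; apply: nP; right.
Qed.

Lemma setSymD_subD P P' Q Q' : P' `<=` P -> Q' `<=` Q ->
  setSymD P Q `<=` setSymD P' Q' `|` ((P `\` P') `|` (Q `\` Q')).
Proof.
move=> P'P Q'Q x [[Px nQx]|[Qx nPx]].
- have [P'x|] := pselect (P' x); last by right; left.
  by left; left; split => // /Q'Q.
- have [Q'x|] := pselect (Q' x); last by right; right.
  by left; right; split => // /P'P.
Qed.

Lemma bigcap_bigcup_setD (G : nat -> set T) :
  \bigcap_k (\bigcup_j G j `\` G k) = set0.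
Proof.
apply/seteqP; split => // x Gx; have [[j _ Gjx] _] := Gx 0%N I.
by have [_] := Gx j I.
Qed.

End SymmetricDifference.

Section Radon.
Context d (X : ctbDistrLatticeType d) (R : realType) (nu : set (St X) -> R)
  (hnu : radon_measure nu).
Implicit Types S T : set (St X).

Lemma radon_ge0 S : stone_borel S -> 0 <= nu S.
Proof. by case: hnu => + _ _ _; apply. Qed.

Lemma radon0 : nu set0 = 0.
Proof. by case: hnu. Qed.

Lemma radonU S T : stone_borel S -> stone_borel T -> S `&` T = set0 ->
  nu (S `|` T) = nu S + nu T.
Proof.
move=> bS bT ST0.
have sumST : (fun n => \sum_(0 <= i < n) nu (bigcup2 S T i)) @ \oo --> nu (S `|` T).
  rewrite -bigcup2E; case: hnu => _ _ + _; apply; last by rewrite -trivIset_bigcup2.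
  by move=> [|[|n]] //=; exact: stone_borel0.
have sumST' : (fun n => \sum_(0 <= i < n) nu (bigcup2 S T i)) @ \oo --> nu S + nu T.
  apply: cvg_near_cst; exists 2%N => // n /= n_ge2.
  rewrite -(subnK n_ge2); elim: (n - 2)%N => [|m IH].
    by rewrite !big_nat_recr //= big_geq // add0r.
  by rewrite addSn big_nat_recr //= IH addn2 /= radon0 addr0.
exact: cvg_unique sumST sumST'.
Qed.

Lemma radonD S T : stone_borel S -> stone_borel T -> S `<=` T ->
  nu (T `\` S) = nu T - nu S.
Proof.
move=> bS bT ST.
have := radonU bS (stone_borelD bT bS) (setDIK S T).
by rewrite setDUK // => ->; rewrite [nu S + _]addrC addrK.
Qed.

Lemma le_radon S T : stone_borel S -> stone_borel T -> S `<=` T -> nu S <= nu T.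
Proof.
move=> bS bT ST; rewrite -subr_ge0 -radonD //; apply: radon_ge0; exact: stone_borelD.
Qed.

Lemma radonU2 S T : stone_borel S -> stone_borel T -> nu (S `|` T) <= nu S + nu T.
Proof.
move=> bS bT; have SST : S `<=` S `|` T by move=> x; left.
rewrite -{1}(setDUK SST) radonU ?setDIK; auto with borel.
by rewrite lerD2l; apply: le_radon; auto with borel; move=> x [[]].
Qed.

Lemma radon_nonincreasing_cvg0 (E : nat -> set (St X)) :
  (forall n, stone_borel (E n)) -> (forall n, E n.+1 `<=` E n) ->
  \bigcap_n E n = set0 -> (fun n => nu (E n)) @ \oo --> 0.
Proof.
move=> bE E_decr E0.
have E_le m n : (m <= n)%N -> E n `<=` E m.
  move=> /subnK <-; elim: (n - m)%N => [|k IH] //=.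
  by rewrite addSn; exact: subset_trans (E_decr _) IH.
pose F i := E i `\` E i.+1.
have tF : trivIset setT F.
  move=> i j _ _ [x [[Eix nEi1x] [Ejx nEj1x]]].
  case: (ltngtP i j) => // ij; exfalso; [apply: nEi1x | apply: nEj1x]; exact: (E_le _ _ ij).
have UF : \bigcup_i F i = E 0%N.
  apply/seteqP; split => [x [i _ [Eix _]]|x E0x]; first exact: (E_le 0%N i).
  have [n nEnx] : exists n, ~ E n x.
    apply: contrapT => nE; suff : (\bigcap_n E n) x by rewrite E0.
    by move=> n _; apply: contrapT => nEnx; apply: nE; exists n.
  elim: n nEnx => [|n IH] nEnx //.
  by have [Enx|/IH] := pselect (E n x); [exists n|].
have sumF n : \sum_(0 <= i < n) nu (F i) = nu (E 0%N) - nu (E n).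
  elim: n => [|n IH]; first by rewrite big_geq // subrr.
  by rewrite big_nat_recr //= IH /F radonD // addrA subrK.
have cvg_sumF : (fun n => nu (E 0%N) - nu (E n)) @ \oo --> nu (E 0%N).
  rewrite -(funext sumF) -UF.
  by case: hnu => _ _ + _; apply => // i; exact: stone_borelD.
have -> : (fun n => nu (E n)) = fun n => nu (E 0%N) - (nu (E 0%N) - nu (E n)).
  by apply/funext => n; rewrite opprB addrC subrK.
by rewrite -[X in _ --> X](subrr (nu (E 0%N))); apply: cvgB => //; exact: cvg_cst.
Qed.

End Radon.

Section BorelDistance.
Context (R : realType) dA dB (A : ctbDistrLatticeType dA) (B : ctbDistrLatticeType dB)
  (nu : set (St B) -> R) (hnu : radon_measure nu) (psi psi' : bhom A B).
Local Notation h := (stone_map psi).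
Local Notation h' := (stone_map psi').

Definition borel_dist (S : set (St A)) : R := nu (setSymD (h @^-1` S) (h' @^-1` S)).

Lemma borel_dist0 : borel_dist set0 = 0.
Proof. by rewrite /borel_dist !preimage_set0 /setSymD set0D setU0 (radon0 hnu). Qed.

Lemma borel_distC S : borel_dist (~` S) = borel_dist S.
Proof. by rewrite /borel_dist -!preimage_setC setSymDC. Qed.

Lemma borel_dist_ge0 S : stone_borel S -> 0 <= borel_dist S.
Proof. by move=> bS; apply: (radon_ge0 hnu); auto with borel. Qed.

Lemma borel_distU S T : stone_borel S -> stone_borel T ->
  borel_dist (S `|` T) <= borel_dist S + borel_dist T.
Proof.
move=> bS bT; rewrite /borel_dist.
have := @setSymDU _ (h @^-1` S) (h @^-1` T) (h' @^-1` S) (h' @^-1` T).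
move=> /(le_radon hnu) le_nu; apply: le_trans (le_nu _ _) _; auto with borel.
by apply: (radonU2 hnu); auto with borel.
Qed.

Lemma borel_dist_le_setD S T : stone_borel S -> stone_borel T -> T `<=` S ->
  borel_dist S <= borel_dist T + (nu (h @^-1` (S `\` T)) + nu (h' @^-1` (S `\` T))).
Proof.
move=> bS bT TS.
have := setSymD_subD (preimage_subset (f := h) TS) (preimage_subset (f := h') TS).
move=> /(le_radon hnu) le_nu; apply: le_trans (le_nu _ _) _; auto with borel.
apply: le_trans (radonU2 hnu _ _) _; auto with borel.
by rewrite lerD2l; apply: (radonU2 hnu); auto with borel.
Qed.

Lemma clop_inner_regular U e : stone_open U -> 0 < e ->
  exists2 c, clop c `<=` U & nu (h @^-1` (U `\` clop c)) < e.
Proof.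
move=> oU e_gt0.
have [K [cK KU nuK]] : exists K,
    [/\ stone_compact K, K `<=` h @^-1` U & nu (h @^-1` U) - e < nu K].
  by case: hnu => _ _ _; apply; auto with borel.
pose P b := exists2 a, clop a `<=` U & b = psi a.
have cov : K `<=` \bigcup_(b in P) clop b.
  by move=> y /KU /oU [a [ya aU]]; exists (psi a) => //; exists a.
have P0 : P Order.bottom by exists Order.bottom; [rewrite clop0 => x | rewrite bhom0].
have PU a b : P a -> P b -> P (Order.join a b).
  move=> [a' a'U ->] [b' b'U ->]; exists (Order.join a' b'); last by rewrite bhomU.
  by rewrite clopU => x [/a'U|/b'U].
have [_ [a aU ->] Ka] := compact_clop_cover cK cov P0 PU.
exists a => //.
have : nu K <= nu (clop (psi a)) by apply: (le_radon hnu) Ka; auto with borel.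
have -> : h @^-1` (U `\` clop a) = h @^-1` U `\` clop (psi a) by [].
rewrite radonD //; [lra | auto with borel.. | by move=> y ya; exact: aU].
Qed.

End BorelDistance.

Section PointwiseBorelConvergence.
Context (R : realType) dA dB (A : ctbDistrLatticeType dA) (B : ctbDistrLatticeType dB)
  (nu : set (St B) -> R) (hnu : radon_measure nu)
  (phis : nat -> bhom A B) (phi : bhom A B)
  (hunif : unif_ctbl_additive (fun n => pushforward_m nu (stone_map (phis n)))).
Local Notation f n := (stone_map (phis n)).
Local Notation g := (stone_map phi).
Local Notation dist n := (borel_dist nu (phis n) phi).

Lemma unif_ctbl_additive_tail (G : nat -> set (St A)) : (forall k, stone_borel (G k)) ->
  (forall k, G k `<=` G k.+1) -> forall e, 0 < e ->
  exists N, forall k n, (N <= k)%N -> nu (f n @^-1` (\bigcup_j G j `\` G k)) < e.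
Proof.
move=> bG G_incr e e_gt0.
have bE k : stone_borel (\bigcup_j G j `\` G k) by auto with borel.
have E_decr k : \bigcup_j G j `\` G k.+1 `<=` \bigcup_j G j `\` G k.
  by move=> x [Gx nGx]; split => // /G_incr.
have [N tailN] := hunif bE E_decr (bigcap_bigcup_setD G) e_gt0.
by exists N => k n Nk; apply: le_lt_trans (ler_norm _) (tailN k n Nk).
Qed.

Lemma clop_inner_regular_unif U e : stone_open U -> 0 < e ->
  exists2 c, clop c `<=` U & forall n, nu (f n @^-1` (U `\` clop c)) < e.
Proof.
move=> oU e_gt0; apply: contrapT => no_unif.
have e2_gt0 : 0 < e / 2 by rewrite divr_gt0.
have step c : exists c', clop c `<=` U -> [/\ clop c' `<=` U, (c <= c')%O &
    exists n, e / 2 < nu (f n @^-1` (clop c' `\` clop c))].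
  have [cU|] := pselect (clop c `<=` U); last by exists c.
  have [n big_n] : exists n, e <= nu (f n @^-1` (U `\` clop c)).
    apply: contrapT => /forallNP small; apply: no_unif; exists c => // n.
    by rewrite ltNge; apply/negP; exact: small.
  have [c1 c1U small_c1] := clop_inner_regular hnu (phis n) oU e2_gt0.
  exists (Order.join c c1) => _; split; [by rewrite clopU => x [/cU|/c1U]|exact: leUl|].
  exists n; suff : nu (f n @^-1` (U `\` clop c)) <=
      nu (f n @^-1` (clop (Order.join c c1) `\` clop c)) + nu (f n @^-1` (U `\` clop c1)).
    by lra.
  apply: le_trans (radonU2 hnu _ _); auto with borel.
  apply: (le_radon hnu); auto with borel.
  move=> x [Ux ncx]; have [c1x|] := pselect (clop c1 (f n x)); last by right.
  by left; split => //; rewrite clopU; right.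
have [next hnext] := choice step.
pose cs k := iter k next Order.bottom.
have csU k : clop (cs k) `<=` U.
  by elim: k => [|k IH]; [rewrite clop0 => x | have [] := hnext _ IH].
have cs_incr k : clop (cs k) `<=` clop (cs k.+1).
  by have [_ le_next _] := hnext _ (csU k); move=> x xk; exact: ultra_up xk le_next.
have [N tailN] := unif_ctbl_additive_tail (fun k => stone_borel_clop (cs k)) cs_incr e2_gt0.
have [_ _ [n big_n]] := hnext _ (csU N).
have : nu (f n @^-1` (clop (next (cs N)) `\` clop (cs N))) <=
    nu (f n @^-1` (\bigcup_j clop (cs j) `\` clop (cs N))).
  by apply: (le_radon hnu); auto with borel; move=> x [xN1 nxN]; split => //; exists N.+1.
have := tailN N n (leqnn N); lra.
Qed.

Lemma cvg_borel_distU S T : stone_borel S -> stone_borel T ->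
  (fun n => dist n S) @ \oo --> 0 -> (fun n => dist n T) @ \oo --> 0 ->
  (fun n => dist n (S `|` T)) @ \oo --> 0.
Proof.
move=> bS bT cvgS cvgT.
apply: (squeeze_cvgr (f := fun=> 0) (h := fun n => dist n S + dist n T)).
- by apply: nearW => n; rewrite borel_dist_ge0 ?borel_distU //; auto with borel.
- exact: cvg_cst.
- by rewrite -[0]addr0; exact: cvgD.
Qed.

Lemma cvg_borel_dist_bigcup (F : nat -> set (St A)) : (forall k, stone_borel (F k)) ->
  (forall k, (fun n => dist n (F k)) @ \oo --> 0) ->
  (fun n => dist n (\bigcup_k F k)) @ \oo --> 0.
Proof.
move=> bF cvgF.
pose G k := \big[setU/set0]_(i < k) F i.
have G0 : G 0%N = set0 by rewrite /G big_ord0.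
have GS k : G k.+1 = G k `|` F k by rewrite /G big_ord_recr.
have bG k : stone_borel (G k).
  by elim: k => [|k bGk]; rewrite ?G0 ?GS; auto with borel.
have cvgG k : (fun n => dist n (G k)) @ \oo --> 0.
  elim: k => [|k cvgGk]; last by rewrite GS; exact: cvg_borel_distU.
  by rewrite G0; under eq_fun do rewrite (borel_dist0 hnu); exact: cvg_cst.
have G_incr k : G k `<=` G k.+1 by rewrite GS; exact: subsetUl.
have UG : \bigcup_k G k = \bigcup_k F k.
  apply/seteqP; split => [x [k _]|x [k _ Fkx]]; first exact: bigsetU_bigcup.
  by exists k.+1 => //; rewrite GS; right.
rewrite -UG; apply: cvgr0_approx => [n|e e_gt0]; first by apply: borel_dist_ge0; auto with borel.
have e2_gt0 : 0 < e / 2 by rewrite divr_gt0.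
have [N tailN] := unif_ctbl_additive_tail bG G_incr e2_gt0.
have g_tail : (fun k => nu (g @^-1` (\bigcup_j G j `\` G k))) @ \oo --> 0.
  apply: (radon_nonincreasing_cvg0 hnu); auto with borel.
  - by move=> k x [Gx nGx]; split => // /G_incr.
  - by rewrite -preimage_bigcap bigcap_bigcup_setD preimage_set0.
have [M _ tailM] := cvgr0_norm_lt _ g_tail _ e2_gt0.
pose k := maxn N M.
exists (fun n => dist n (G k)) => // n.
have GkU : G k `<=` \bigcup_j G j by move=> x Gkx; exists k.
have bU : stone_borel (\bigcup_j G j) by auto with borel.
have := borel_dist_le_setD hnu (phis n) phi bU (bG k) GkU.
have := tailN k n (leq_maxl N M); have := tailM k (leq_maxr N M).
have := ler_norm (nu (g @^-1` (\bigcup_j G j `\` G k))).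
rewrite /=; lra.
Qed.

Context (mu : B -> R) (hclop : forall b, nu (clop b) = mu b)
  (hpw : pw_metric_cvg mu phis phi).

Lemma borel_dist_clop n a : dist n (clop a) = d_mu mu (phis n a) (phi a).
Proof. by rewrite /d_mu -hclop clop_symd. Qed.

Lemma cvg_borel_dist_open U : stone_open U -> (fun n => dist n U) @ \oo --> 0.
Proof.
move=> oU; apply: cvgr0_approx => [n|e e_gt0]; first by apply: borel_dist_ge0; auto with borel.
have e2_gt0 : 0 < e / 2 by rewrite divr_gt0.
have [c cU small_c] := clop_inner_regular_unif oU e2_gt0.
have [c' c'U small_c'] := clop_inner_regular hnu phi oU e2_gt0.
pose b := Order.join c c'.
have bU : clop b `<=` U by rewrite clopU => x [/cU|/c'U].
exists (fun n => d_mu mu (phis n b) (phi b)); first exact: hpw.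
move=> n; rewrite -borel_dist_clop.
have := borel_dist_le_setD hnu (phis n) phi
  (stone_borel_open oU) (stone_borel_clop b) bU.
have : nu (f n @^-1` (U `\` clop b)) <= nu (f n @^-1` (U `\` clop c)).
  apply: (le_radon hnu); auto with borel.
  by apply: preimage_subset; apply: setDS; rewrite /b clopU => x; left.
have : nu (g @^-1` (U `\` clop b)) <= nu (g @^-1` (U `\` clop c')).
  apply: (le_radon hnu); auto with borel.
  by apply: preimage_subset; apply: setDS; rewrite /b clopU => x; right.
have := small_c n; lra.
Qed.

End PointwiseBorelConvergence.

Theorem proposition5p4 (R : realType) (dA dB : Order.disp_t)
  (A : ctbDistrLatticeType dA) (B : ctbDistrLatticeType dB)
  (mu : B -> R) (nu : set (St B) -> R)
  (phis : nat -> bhom A B) (phi : bhom A B) :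
  metric_ba mu ->
  radon_extension mu nu ->
  pw_metric_cvg mu phis phi ->
  unif_ctbl_additive (fun n => pushforward_m nu (stone_map (phis n))) ->
  pw_borel_metric_cvg nu phis phi.
Proof.
(* Positivity and additivity of mu are inherited from nu; only nu (clop b) = mu b is used. *)
move=> _ [hnu hclop] hpw hunif S bS.
pose D := [set S | stone_borel S /\ (fun n => borel_dist nu (phis n) phi S) @ \oo --> 0].
suff /(_ S bS) [] : @stone_borel _ A `<=` D by [].
apply: smallest_sub => [|U oU]; last first.
  split; first exact: stone_borel_open.
  exact: (cvg_borel_dist_open hnu hunif hclop hpw oU).
split => [|S' [bS' cvgS']|F DF].
- split; first exact: stone_borel0.
  by under eq_fun do rewrite (borel_dist0 hnu); exact: cvg_cst.
- rewrite setTD; split; first exact: stone_borelC.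
  by under eq_fun do rewrite borel_distC.
- split; first by apply: stone_borel_bigcup => k; case: (DF k).
  by apply: (cvg_borel_dist_bigcup hnu hunif) => k; case: (DF k).
Qed.
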